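(* Let $\theta^*\in\mathbb{R}^n$, let $\phi:\mathbb{R}_{\ge0}\to\mathbb{R}^n$ be piecewise continuous with $|\phi(t)|\le M$ for all $t\ge0$ (some $M>0$), and $y^*(t):=\phi^T(t)\theta^*$. Let $t_1,\dots,t_N\ge0$ be such that $\mathcal{D}=[\phi(t_1),\dots,\phi(t_N)]$ has rank $n$. Let $\beta,\gamma,\mu>0$ with $\beta\ge2\gamma/\mu$, $\mathcal{N}_t:=1+\mu\phi^T(t)\phi(t)$, and $$B(\theta,\mu):=\sum_{k=1}^N\frac{\phi(t_k)}{1+\mu\phi^T(t_k)\phi(t_k)}\big(\phi^T(t_k)\theta-y^*(t_k)\big).$$ Then $(\theta^*,\theta^* )$ is uniformly globally asymptotically stable for the system in $(\theta,\vartheta)\in\mathbb{R}^{2n}$ $$\dot\theta=-\beta(\theta-\vartheta),\qquad\dot\vartheta=-\gamma\Big(\frac{1}{\mathcal{N}_t}\phi(t)\big(\phi^T(t)\theta-y^*(t)\big)+B(\theta,\mu)\Big).$$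
   Context: No persistent excitation is assumed. For a system $\dot x=f(x,t)$ with equilibrium $x^*$: uniformly globally stable (UGS) means there is a class-$\mathcal{K}_\infty$ function $\kappa$ with $|x(t)-x^*|\le\kappa(|x_\circ-x^*|)$ for all $t\ge t_\circ$, for every solution from every $(x_\circ,t_\circ)$; uniformly globally attractive (UGA) means for each $r,\sigma>0$ there is $T'>0$ with $|x_\circ-x^*|\le r\Rightarrow|x(t)-x^*|\le\sigma$ for all $t\ge t_\circ+T'$, uniformly in $t_\circ\ge0$; UGAS means UGS and UGA. *)

From Coquelicot Require Import Coquelicot.
From Stdlib Require Import Reals.
From HB Require Import structures.
From mathcomp Require Import all_boot all_order all_algebra.
From mathcomp Require Import Rstruct.

Set Implicit Arguments.
Unset Strict Implicit.
Unset Printing Implicit Defensive.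
Import Order.TTheory GRing.Theory Num.Theory.
Local Open Scope ring_scope.

Definition dotv (n : nat) (u v : 'cV[R]_n) : R := \sum_(i < n) u i 0 * v i 0.
Definition vnorm (n : nat) (u : 'cV[R]_n) : R := sqrt (dotv u u).

Definition classKinf (k : R -> R) : Prop :=
  k 0 = 0 /\
  (forall s, 0 <= s -> Coquelicot.Continuity.continuous k s) /\
  (forall s1 s2, 0 <= s1 -> s1 < s2 -> k s1 < k s2) /\
  (forall c, exists s, 0 <= s /\ c <= k s).

(* piecewise continuity of phi : [0,+oo) -> R^n: on every bounded interval
   [0,T] there are only finitely many points (the list L) away from which
   every component is continuous, and at those points all one-sided limits
   exist (finite).  The point 0 is treated with its right limit only. *)
Definition piecewise_continuous (n : nat) (phi : R -> 'cV[R]_n) : Prop :=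
  forall T : R, 0 <= T -> exists L : seq R,
    (forall t, 0 < t -> t <= T -> ~ List.In t L ->
       forall i : 'I_n, Coquelicot.Continuity.continuous (fun s => phi s i 0) t) /\
    (forall p, List.In p L -> forall i : 'I_n,
       (exists l : R, filterlim (fun s => phi s i 0) (at_right p) (locally l)) /\
       (0 < p -> exists l : R, filterlim (fun s => phi s i 0) (at_left p) (locally l))) /\
    (forall i : 'I_n, exists l : R, filterlim (fun s => phi s i 0) (at_right 0) (locally l)).

(* (Caratheodory) solution of  dx/dt = F t x  on [t0, +oo) from x(t0) = x0:
   x satisfies the integral equation componentwise (Riemann integral). *)
Definition is_solution (m : nat) (F : R -> 'cV[R]_m -> 'cV[R]_m)
    (t0 : R) (x0 : 'cV[R]_m) (x : R -> 'cV[R]_m) : Prop :=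
  x t0 = x0 /\
  forall t, t0 <= t -> forall i : 'I_m,
    is_RInt (fun s => F s (x s) i 0) t0 t (x t i 0 - x0 i 0).

Definition UGS (m : nat) (F : R -> 'cV[R]_m -> 'cV[R]_m) (xs : 'cV[R]_m) : Prop :=
  exists kappa : R -> R, classKinf kappa /\
    forall t0 x0 x, 0 <= t0 -> is_solution F t0 x0 x ->
      forall t, t0 <= t -> vnorm (x t - xs) <= kappa (vnorm (x0 - xs)).

Definition UGA (m : nat) (F : R -> 'cV[R]_m -> 'cV[R]_m) (xs : 'cV[R]_m) : Prop :=
  forall r sigma : R, 0 < r -> 0 < sigma -> exists T' : R, 0 < T' /\
    forall t0 x0 x, 0 <= t0 -> is_solution F t0 x0 x ->
      vnorm (x0 - xs) <= r ->
      forall t, t0 + T' <= t -> vnorm (x t - xs) <= sigma.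

Definition UGAS (m : nat) (F : R -> 'cV[R]_m -> 'cV[R]_m) (xs : 'cV[R]_m) : Prop :=
  UGS F xs /\ UGA F xs.

Definition ystar (n : nat) (phi : R -> 'cV[R]_n) (ths : 'cV[R]_n) (t : R) : R :=
  dotv (phi t) ths.

Definition Nt (n : nat) (phi : R -> 'cV[R]_n) (mu t : R) : R :=
  1 + mu * dotv (phi t) (phi t).

Definition Bterm (n N : nat) (phi : R -> 'cV[R]_n) (ths : 'cV[R]_n)
    (ts : 'I_N -> R) (th : 'cV[R]_n) (mu : R) : 'cV[R]_n :=
  \sum_(k < N) ((dotv (phi (ts k)) th - ystar phi ths (ts k))
                 / (1 + mu * dotv (phi (ts k)) (phi (ts k)))) *: phi (ts k).

Definition Dmat (n N : nat) (phi : R -> 'cV[R]_n) (ts : 'I_N -> R) : 'M[R]_(n, N) :=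
  \matrix_(i < n, k < N) phi (ts k) i 0.

(* the system in z = (theta, vartheta) in R^(2n), stacked as col_mx theta vartheta *)
Definition sysF (n N : nat) (phi : R -> 'cV[R]_n) (ths : 'cV[R]_n)
    (ts : 'I_N -> R) (beta gamma mu : R) (t : R) (z : 'cV[R]_(n + n)) : 'cV[R]_(n + n) :=
  let th := usubmx z in
  let vth := dsubmx z in
  col_mx (- beta *: (th - vth))
         (- gamma *: (((dotv (phi t) th - ystar phi ths t) / Nt phi mu t) *: phi t
                      + Bterm phi ths ts th mu)).

(* In the error coordinates e = theta - theta*, v = vartheta - theta* the system no
   longer involves theta*, and
     V = |v|^2 - <v, e> + |e|^2 / 2 + (gamma / beta) sum_k (phi(t_k)^T e)^2 / N_{t_k}
   is a time-invariant quadratic form equivalent to |e|^2 + |v|^2.  Along solutions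
     dV/dt = gamma / N_t ((phi^T e)^2 - 2 (phi^T e) (phi^T v))
             - gamma sum_k (phi(t_k)^T e)^2 / N_{t_k} - beta |e - v|^2.
   The first term is sign-indefinite, but the normalization bounds it by
   (gamma / mu) |e - v|^2, which beta >= 2 gamma / mu absorbs; the rank condition on D
   makes the stored-data term coercive in e.  Hence dV/dt <= - lambda V with lambda
   independent of t and t0, so (1 + lambda (t - t0)) |z(t) - z*|^2 <= K |z(t0) - z*|^2,
   which gives UGAS with no excitation condition on phi.  Solutions are Caratheodory and
   phi is only piecewise continuous, so the decay of exp(lambda t) V comes from the mean
   value theorem on the finitely many intervals where the vector field is continuous. *)

From Coquelicot Require Import Coquelicot.
From Stdlib Require Import Reals Lra.
From mathcomp Require Import all_boot all_order all_algebra.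
From mathcomp Require Import Rstruct.
From mathcomp Require Import ring lra.
Import Order.TTheory GRing.Theory Num.Theory.
Set Implicit Arguments.
Unset Strict Implicit.
Unset Printing Implicit Defensive.
Local Open Scope ring_scope.

Section DotProduct.
Variable k : nat.
Implicit Types u v w : 'cV[R]_k.

Lemma dotvC u v : dotv u v = dotv v u.
Proof. by apply: eq_bigr => i _; rewrite mulrC. Qed.

Lemma dotvDl u v w : dotv (u + v) w = dotv u w + dotv v w.
Proof. by rewrite /dotv -big_split; apply: eq_bigr => i _; rewrite mxE mulrDl. Qed.

Lemma dotvBl u v w : dotv (u - v) w = dotv u w - dotv v w.
Proof. by rewrite /dotv -sumrB; apply: eq_bigr => i _; rewrite !mxE mulrBl. Qed.

Lemma dotvZl a u w : dotv (a *: u) w = a * dotv u w.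
Proof. by rewrite /dotv mulr_sumr; apply: eq_bigr => i _; rewrite mxE mulrA. Qed.

Lemma dotvDr u v w : dotv w (u + v) = dotv w u + dotv w v.
Proof. by rewrite dotvC dotvDl !(dotvC w). Qed.

Lemma dotvBr u v w : dotv w (u - v) = dotv w u - dotv w v.
Proof. by rewrite dotvC dotvBl !(dotvC w). Qed.

Lemma dotvZr a u w : dotv w (a *: u) = a * dotv w u.
Proof. by rewrite dotvC dotvZl dotvC. Qed.

Lemma dotv_suml I (r : seq I) (P : pred I) (F : I -> 'cV[R]_k) w :
  dotv (\sum_(i <- r | P i) F i) w = \sum_(i <- r | P i) dotv (F i) w.
Proof.
elim/big_rec2: _ => [|i y1 y2 _ <-]; last by rewrite dotvDl.
by rewrite /dotv big1 // => i _; rewrite mxE mul0r.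
Qed.

Lemma dotv_ge0 u : 0 <= dotv u u.
Proof. by apply: sumr_ge0 => i _; rewrite -expr2 sqr_ge0. Qed.

Lemma dotv_self_eq0 u w : dotv u u = 0 -> dotv u w = 0.
Proof.
move=> uu0; rewrite /dotv big1 // => i _.
have /eqP : u i 0 ^+ 2 = 0.
  exact: (psumr_eq0P (P := xpredT) (fun j _ => sqr_ge0 (u j 0))).
by rewrite sqrf_eq0 => /eqP ->; rewrite mul0r.
Qed.

Lemma cauchy_schwarz_dotv u v : dotv u v ^+ 2 <= dotv u u * dotv v v.
Proof.
have [uu0|uu_neq0] := eqVneq (dotv u u) 0.
  by rewrite (dotv_self_eq0 _ uu0) uu0 expr0n mul0r.
have uu_gt0 : 0 < dotv u u by rewrite lt0r uu_neq0 dotv_ge0.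
have := dotv_ge0 (dotv u u *: v - dotv u v *: u).
rewrite !(dotvBl, dotvBr, dotvZl, dotvZr) (dotvC v u) => H.
have : 0 <= dotv u u * (dotv u u * dotv v v - dotv u v ^+ 2) by lra.
by rewrite pmulr_rge0 // subr_ge0.
Qed.

Lemma dotv_combination u v a b : dotv (a *: u + b *: v) (a *: u + b *: v) =
  a ^+ 2 * dotv u u + 2 * a * b * dotv u v + b ^+ 2 * dotv v v.
Proof. rewrite !(dotvDl, dotvDr, dotvZl, dotvZr) (dotvC v u); ring. Qed.

Lemma dotv_sqrB u v : dotv (u - v) (u - v) = dotv u u - 2 * dotv u v + dotv v v.
Proof. rewrite !(dotvBl, dotvBr) (dotvC v u); ring. Qed.

End DotProduct.

(* A left inverse [P] of [D^T] gives [e = P (D^T e)], and Cauchy-Schwarz on the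
   rows of [P] bounds [|e|^2] by [|P|_F^2 |D^T e|^2]. *)
Lemma full_rank_coercive n N (D : 'M[R]_(n, N)) : \rank D = n ->
  exists2 c, 0 < c & forall e, c * dotv e e <= dotv (D^T *m e) (D^T *m e).
Proof.
move=> rankD.
have DT_full : row_full D^T by rewrite /row_full mxrank_tr rankD.
set P := pinvmx D^T.
have PDT : P *m D^T = 1%:M := mulVpmx DT_full.
set normP := \sum_(i < n) \sum_(k < N) P i k ^+ 2.
have normP_ge0 : 0 <= normP by do 2!(apply: sumr_ge0 => ? _); exact: sqr_ge0.
exists (normP + 1)^-1; first by rewrite invr_gt0; lra.
move=> e; set w := D^T *m e.
have eP : e = P *m w by rewrite /w mulmxA PDT mul1mx.
have ee_le : dotv e e <= normP * dotv w w.
  rewrite /normP mulr_suml /dotv; apply: ler_sum => i _.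
  have -> : e i 0 = dotv (\col_k P i k) w.
    by rewrite {1}eP mxE /dotv; apply: eq_bigr => j _; rewrite [in RHS]mxE.
  rewrite -expr2.
  have := cauchy_schwarz_dotv (\col_k P i k) w.
  by rewrite /dotv; under [X in _ <= X * _ -> _]eq_bigr => k _ do rewrite mxE -expr2.
have := dotv_ge0 w.
rewrite ler_pdivrMl; last lra.
nra.
Qed.

Lemma dotv_Dmat_trmx n N (phi : R -> 'cV[R]_n) (ts : 'I_N -> R) e :
  dotv ((Dmat phi ts)^T *m e) ((Dmat phi ts)^T *m e) =
  \sum_(k < N) dotv (phi (ts k)) e ^+ 2.
Proof.
rewrite /dotv; apply: eq_bigr => k _; rewrite -expr2; congr (_ ^+ 2).
by rewrite mxE; apply: eq_bigr => i _; rewrite !mxE.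
Qed.

Lemma is_derive_mulr (f g : R -> R) s df dg : is_derive f s df -> is_derive g s dg ->
  is_derive (fun t => f t * g t) s (df * g s + f s * dg).
Proof. by move=> Hf Hg; apply: is_derive_mult Hf Hg _; exact: Rmult_comm. Qed.

Lemma is_derive_sum k (g : 'I_k -> R -> R) (dg : 'I_k -> R) s :
  (forall i, is_derive (g i) s (dg i)) ->
  is_derive (fun t => \sum_(i < k) g i t) s (\sum_(i < k) dg i).
Proof.
elim: k g dg => [|k IH] g dg Hg.
  rewrite big_ord0; apply: (is_derive_ext (fun _ : R => (0 : R))); last exact: is_derive_const.
  by move=> t; rewrite big_ord0.
rewrite big_ord_recr /=.
apply: (is_derive_ext (fun t => \sum_(i < k) g (widen_ord (leqnSn k) i) t + g ord_max t)).
  by move=> t; rewrite big_ord_recr.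
by apply: is_derive_plus; [apply: IH => i | exact: Hg].
Qed.

Lemma continuous_sum k (g : 'I_k -> R -> R) s :
  (forall i, continuous (g i) s) -> continuous (fun t => \sum_(i < k) g i t) s.
Proof.
elim: k g => [|k IH] g Hg.
  apply: (continuous_ext (fun _ : R => (0 : R))); last exact: continuous_const.
  by move=> t; rewrite big_ord0.
apply: (continuous_ext (fun t => \sum_(i < k) g (widen_ord (leqnSn k) i) t + g ord_max t)).
  by move=> t; rewrite big_ord_recr.
by apply: continuous_plus; [apply: IH => i | exact: Hg].
Qed.

Definition is_derive_cV k (y : R -> 'cV[R]_k) s (v : 'cV[R]_k) :=
  forall i, is_derive (fun t => y t i 0) s (v i 0).
Definition continuous_cV k (y : R -> 'cV[R]_k) s :=
  forall i, continuous (fun t => y t i 0) s.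

Section CurvesInRn.
Variables (k : nat) (s : R).
Implicit Types (u w : R -> 'cV[R]_k) (c : 'cV[R]_k).

Lemma is_derive_dotv u w du dw : is_derive_cV u s du -> is_derive_cV w s dw ->
  is_derive (fun t => dotv (u t) (w t)) s (dotv du (w s) + dotv (u s) dw).
Proof.
move=> Hu Hw; rewrite /dotv -big_split /=.
by apply: is_derive_sum => i; apply: is_derive_mulr.
Qed.

Lemma is_derive_dotvr c u du : is_derive_cV u s du ->
  is_derive (fun t => dotv c (u t)) s (dotv c du).
Proof. by move=> Hu; apply: is_derive_sum => i; apply: is_derive_scal. Qed.

Lemma continuous_dotv u w : continuous_cV u s -> continuous_cV w s ->
  continuous (fun t => dotv (u t) (w t)) s.
Proof. by move=> Hu Hw; apply: continuous_sum => i; apply: continuous_mult. Qed.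

Lemma continuous_dotvr c u : continuous_cV u s -> continuous (fun t => dotv c (u t)) s.
Proof.
by move=> Hu; apply: continuous_sum => i; apply: continuous_mult => //; exact: continuous_const.
Qed.

Lemma continuous_cV_const c : continuous_cV (fun _ => c) s.
Proof. by move=> i; exact: continuous_const. Qed.

Lemma is_derive_cV_subr u du c : is_derive_cV u s du -> is_derive_cV (fun t => u t - c) s du.
Proof.
move=> Hu i; apply: (is_derive_ext (fun t => u t i 0 - c i 0)); first by move=> t; rewrite !mxE.
by rewrite -[du i 0]subr0; apply: is_derive_minus; [exact: Hu | exact: is_derive_const].
Qed.

Lemma continuous_cV_add u w : continuous_cV u s -> continuous_cV w s ->
  continuous_cV (fun t => u t + w t) s.
Proof.
move=> Hu Hw i; apply: (continuous_ext (fun t => u t i 0 + w t i 0)).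
  by move=> t; rewrite !mxE.
exact: continuous_plus.
Qed.

Lemma continuous_cV_sub u w : continuous_cV u s -> continuous_cV w s ->
  continuous_cV (fun t => u t - w t) s.
Proof.
move=> Hu Hw i; apply: (continuous_ext (fun t => u t i 0 - w t i 0)).
  by move=> t; rewrite !mxE.
exact: continuous_minus.
Qed.

Lemma continuous_cV_scale (a : R -> R) u : continuous a s -> continuous_cV u s ->
  continuous_cV (fun t => a t *: u t) s.
Proof.
move=> Ha Hu i; apply: (continuous_ext (fun t => a t * u t i 0)); first by move=> t; rewrite !mxE.
exact: continuous_mult.
Qed.

Lemma continuous_cV_sum m (g : 'I_m -> R -> 'cV[R]_k) : (forall j, continuous_cV (g j) s) ->
  continuous_cV (fun t => \sum_(j < m) g j t) s.
Proof.
move=> Hg i; apply: (continuous_ext (fun t => \sum_(j < m) g j t i 0)).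
  by move=> t; rewrite summxE.
by apply: continuous_sum => j; exact: Hg.
Qed.

End CurvesInRn.

Section BlockCurves.
Variables (k : nat) (s : R) (y : R -> 'cV[R]_(k + k)).

Lemma is_derive_cV_usubmx v :
  is_derive_cV y s v -> is_derive_cV (fun t => usubmx (y t)) s (usubmx v).
Proof.
move=> Hy i; rewrite mxE.
by apply: (is_derive_ext (fun t => y t (lshift k i) 0)); [move=> t; rewrite mxE | exact: Hy].
Qed.

Lemma is_derive_cV_dsubmx v :
  is_derive_cV y s v -> is_derive_cV (fun t => dsubmx (y t)) s (dsubmx v).
Proof.
move=> Hy i; rewrite mxE.
by apply: (is_derive_ext (fun t => y t (rshift k i) 0)); [move=> t; rewrite mxE | exact: Hy].
Qed.

Lemma continuous_cV_usubmx : continuous_cV y s -> continuous_cV (fun t => usubmx (y t)) s.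
Proof.
move=> Hy i; apply: (continuous_ext (fun t => y t (lshift k i) 0)); last exact: Hy.
by move=> t; rewrite mxE.
Qed.

Lemma continuous_cV_dsubmx : continuous_cV y s -> continuous_cV (fun t => dsubmx (y t)) s.
Proof.
move=> Hy i; apply: (continuous_ext (fun t => y t (rshift k i) 0)); last exact: Hy.
by move=> t; rewrite mxE.
Qed.

End BlockCurves.

Lemma continuous_cV_col_mx k s (a b : R -> 'cV[R]_k) : continuous_cV a s -> continuous_cV b s ->
  continuous_cV (fun t => col_mx (a t) (b t)) s.
Proof.
move=> Ha Hb i.
apply: (continuous_ext (fun t => match split i with inl j => a t j 0 | inr j => b t j 0 end)).
  by move=> t; rewrite mxE.
by case: (split i) => j.
Qed.

Section RealAnalysis.
Local Open Scope R_scope.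

Lemma continuous_of_lipschitz (g : R -> R) s K : 0 <= K ->
  (forall t, Rabs (t - s) < 1 -> Rabs (g t - g s) <= K * Rabs (t - s)) -> continuous g s.
Proof.
move=> K_ge0 g_lip; apply/continuity_pt_filterlim => eps eps_gt0.
exists (Rmin 1 (eps / (K + 1))); split.
  by apply: Rmin_pos; [Lra.lra | apply: Rdiv_lt_0_compat; Lra.lra].
move=> t [_ Hts]; rewrite /R_dist /= /R_dist in Hts *.
have ts_lt1 : Rabs (t - s) < 1 by apply: Rlt_le_trans Hts (Rmin_l _ _).
have ts_lt : Rabs (t - s) * (K + 1) < eps.
  by apply/Rlt_div_r; [Lra.lra | apply: Rlt_le_trans Hts (Rmin_r _ _)].
apply: Rle_lt_trans (g_lip t ts_lt1) _.
have := Rabs_pos (t - s); Lra.nra.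
Qed.

Lemma Rabs_Rmax_sub_le t s a : Rabs (Rmax t a - Rmax s a) <= Rabs (t - s).
Proof.
rewrite /Rmax; case: (Rle_dec t a); case: (Rle_dec s a) => Hs Ht.
- by rewrite Rminus_diag Rabs_R0; exact: Rabs_pos.
- by rewrite !Rabs_left1; Lra.lra.
- by rewrite !Rabs_right; Lra.lra.
- Lra.lra.
Qed.

Lemma nonincreasing_of_derive_le0 (h : R -> R) a b : a <= b ->
  (forall t, a <= t <= b -> continuity_pt h t) ->
  (forall t, a < t < b -> exists2 d, is_derive h t d & d <= 0) -> h b <= h a.
Proof.
move=> Hab h_cont h_der.
have h_der' t : Rmin a b < t < Rmax a b -> is_derive h t (Rmin 0 (Derive h t)).
  rewrite Rmin_left ?Rmax_right // => Ht.
  have [d Hd d_le0] := h_der t Ht.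
  by rewrite (is_derive_unique _ _ _ Hd) Rmin_right.
have [|c [_ Hc]] := MVT_gen h a b (fun t => Rmin 0 (Derive h t)) h_der'.
  by rewrite Rmin_left ?Rmax_right.
have : Rmin 0 (Derive h c) * (b - a) <= 0.
  by apply: Rmult_le_0_r; [exact: Rmin_l | Lra.lra].
Lra.lra.
Qed.

Lemma nonincreasing_of_derive_le0_except (h : R -> R) (L : list R) a b : a <= b ->
  (forall t, a <= t <= b -> continuity_pt h t) ->
  (forall t, a < t < b -> ~ List.In t L -> exists2 d, is_derive h t d & d <= 0) ->
  h b <= h a.
Proof.
elim: L a b => [|p L IH] a b Hab h_cont h_der.
  by apply: nonincreasing_of_derive_le0 => // t Ht; exact: h_der.
have h_der_off a' b' : a <= a' -> b' <= b -> ~ (a' < p < b') ->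
    forall t, a' < t < b' -> ~ List.In t L -> exists2 d, is_derive h t d & d <= 0.
  move=> Ha Hb Hp t Ht tL; apply: h_der; first Lra.lra.
  by case=> [tp | //]; apply: Hp; rewrite tp.
have h_cont_in a' b' : a <= a' -> b' <= b -> forall t, a' <= t <= b' -> continuity_pt h t.
  by move=> Ha Hb t Ht; apply: h_cont; Lra.lra.
case: (Rlt_dec a p) => Hap; last first.
  by apply: IH (h_cont_in _ _ _ _) (h_der_off _ _ _ _ _); Lra.lra.
case: (Rlt_dec p b) => Hpb; last first.
  by apply: IH (h_cont_in _ _ _ _) (h_der_off _ _ _ _ _); Lra.lra.
apply: (Rle_trans _ (h p)).
  by apply: IH (h_cont_in _ _ _ _) (h_der_off _ _ _ _ _); Lra.lra.
by apply: IH (h_cont_in _ _ _ _) (h_der_off _ _ _ _ _); Lra.lra.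
Qed.

End RealAnalysis.

Section Solution.
Local Open Scope R_scope.
Variables (m : nat) (F : R -> 'cV[R]_m -> 'cV[R]_m) (t0 : R) (x0 : 'cV[R]_m)
  (x : R -> 'cV[R]_m).
Hypothesis x_sol : is_solution F t0 x0 x.

Let Fx i s := F s (x s) i ord0.

Lemma solution_RInt i t : t0 <= t -> is_RInt (Fx i) t0 t (x t i ord0 - x0 i ord0).
Proof. by move=> Ht; case: x_sol => _; apply; apply/RleP. Qed.

Lemma solution_increment i s t : t0 <= s <= t ->
  ex_RInt (Fx i) s t /\ x t i ord0 - x s i ord0 = RInt (Fx i) s t.
Proof.
move=> Hst; have int_s := solution_RInt (i := i) (proj1 Hst).
have int_t := solution_RInt (i := i) (Rle_trans _ _ _ (proj1 Hst) (proj2 Hst)).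
have ex_st : ex_RInt (Fx i) s t.
  by apply: (ex_RInt_Chasles_2 _ t0) => //; exists (x t i ord0 - x0 i ord0).
split=> //; have := RInt_Chasles _ _ _ _ (ex_intro _ _ int_s) ex_st.
rewrite (is_RInt_unique _ _ _ _ int_s) (is_RInt_unique _ _ _ _ int_t) /plus /=.
Lra.lra.
Qed.

Lemma solution_lipschitz i T : t0 <= T -> exists2 K, 0 <= K &
  forall s t, t0 <= s <= T -> t0 <= t <= T -> Rabs (x t i ord0 - x s i ord0) <= K * Rabs (t - s).
Proof.
move=> HT; have [M HM] := ex_RInt_ub _ _ _ (ex_intro _ _ (solution_RInt (i := i) HT)).
exists (Rmax M 0); first exact: Rmax_r.
have incr_le s t : t0 <= s <= t -> t <= T -> Rabs (x t i ord0 - x s i ord0) <= Rmax M 0 * (t - s).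
  move=> Hst HtT; have [ex_st ->] := solution_increment i Hst.
  rewrite Rmult_comm; apply: (abs_RInt_le_const _ s t) => //; first Lra.lra.
  move=> u Hu; apply: Rle_trans (Rmax_l M 0); apply: HM.
  by rewrite Rmin_left ?Rmax_right; Lra.lra.
move=> s t Hs Ht; case: (Rle_dec s t) => Hst.
  by rewrite (Rabs_right (t - s)); [apply: incr_le | ]; Lra.lra.
rewrite -Rabs_Ropp Ropp_minus_distr (Rabs_left (t - s)); last Lra.lra.
by have := incr_le t s; Lra.lra.
Qed.

(* A solution lives on [[t0, +oo)]; prolonging it by [x t0] to the left gives a
   curve with two-sided derivatives at the interior points. *)
Lemma continuous_cV_prolong s : t0 <= s -> continuous_cV (fun t => x (Rmax t t0)) s.
Proof.
move=> Hs i; have [K K_ge0 x_lip] := solution_lipschitz i (T := s + 1) ltac:(Lra.lra).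
have Rmax_s : Rmax s t0 = s by rewrite Rmax_left.
apply: (continuous_of_lipschitz K_ge0) => t Ht /=.
have [Ht1 Ht2] := Rabs_def2 _ _ Ht.
apply: Rle_trans (x_lip (Rmax s t0) (Rmax t t0) _ _) _.
- by rewrite Rmax_s; Lra.lra.
- by split; [exact: Rmax_r | apply: Rmax_lub; Lra.lra].
- apply: Rmult_le_compat_l => //; have := Rabs_Rmax_sub_le t s t0.
  by rewrite Rmax_s.
Qed.

Lemma continuous_cV_solution s : t0 < s -> continuous_cV x s.
Proof.
move=> Hs i; have prolong_cont := continuous_cV_prolong (Rlt_le _ _ Hs).
apply: (continuous_ext_loc _ _ _ _ (prolong_cont i)).
by apply: filter_imp (open_gt t0 s Hs) => b Hb; rewrite Rmax_left //; Lra.lra.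
Qed.

Lemma is_derive_cV_prolong s : t0 < s -> continuous_cV (fun u => F u (x u)) s ->
  is_derive_cV (fun t => x (Rmax t t0)) s (F s (x s)).
Proof.
move=> Hs F_cont i.
have int_der : is_derive (fun b => x b i ord0 - x0 i ord0) s (F s (x s) i ord0).
  apply: (is_derive_RInt _ _ _ _ _ (F_cont i)).
  by apply: filter_imp (open_gt t0 s Hs) => b Hb; apply: solution_RInt; Lra.lra.
apply: (is_derive_ext_loc (fun b => x b i ord0 - x0 i ord0 + x0 i ord0)).
  apply: filter_imp (open_gt t0 s Hs) => b Hb; rewrite Rmax_left; last Lra.lra.
  by rewrite /Rminus Rplus_assoc Rplus_opp_l Rplus_0_r.
have := is_derive_plus _ _ _ _ _ int_der (is_derive_const (x0 i ord0) s).
by rewrite /plus /zero /= Rplus_0_r.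
Qed.

End Solution.

Section LyapunovDecay.
Variables (m : nat) (F : R -> 'cV[R]_m -> 'cV[R]_m) (V : 'cV[R]_m -> R)
  (dV : 'cV[R]_m -> 'cV[R]_m -> R) (lam : R).
Hypothesis continuous_V : forall y s, continuous_cV y s -> continuous (fun t => V (y t)) s.
Hypothesis is_derive_V : forall y s v, is_derive_cV y s v ->
  is_derive (fun t => V (y t)) s (dV (y s) v).
Hypothesis dV_le : forall t z, dV z (F t z) <= - lam * V z.
Hypothesis F_piecewise_continuous : forall T, 0 <= T -> exists L : seq R,
  forall t, 0 < t -> t <= T -> ~ List.In t L ->
  forall y, continuous_cV y t -> continuous_cV (fun s => F s (y s)) t.

Lemma exp_lyapunov_nonincreasing t0 x0 x T : 0 <= t0 -> is_solution F t0 x0 x -> t0 <= T ->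
  exp (lam * T) * V (x T) <= exp (lam * t0) * V x0.
Proof.
move=> t0_ge0 x_sol t0T.
have [L F_cont] := F_piecewise_continuous (le_trans t0_ge0 t0T).
pose y t := x (Rmax t t0).
have yT : y T = x T by rewrite /y Rmax_left //; exact/RleP.
have y0 : y t0 = x0 by rewrite /y Rmax_left; [case: x_sol | exact: Rle_refl].
have exp_der u : is_derive (fun t => exp (lam * t)) u (lam * exp (lam * u)).
  by auto_derive => //; rewrite Rmult_1_r.
pose h u := exp (lam * u) * V (y u).
suff : h T <= h t0 by rewrite /h yT y0.
apply/RleP; apply: (nonincreasing_of_derive_le0_except (h := h) (L := L)).
- exact/RleP.
- move=> u [t0u _]; apply/continuity_pt_filterlim.
  change (continuous (fun t => exp (lam * t) * V (y t)) u); apply: continuous_mult.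
    exact: ex_derive_continuous (ex_intro _ _ (exp_der u)).
  exact: continuous_V (continuous_cV_prolong x_sol t0u).
move=> u [t0u uT] uL.
have yu : y u = x u by rewrite /y Rmax_left //; exact: Rlt_le.
have u_gt0 : 0 < u by apply/RltP; apply: Rle_lt_trans t0u; exact/RleP.
have uT' : u <= T by apply/ltW/RltP.
have F_cont_u := F_cont u u_gt0 uT' uL x (continuous_cV_solution x_sol t0u).
have y_der : is_derive_cV y u (F u (y u)).
  by rewrite yu; exact (is_derive_cV_prolong x_sol t0u F_cont_u).
have E_pos : 0 < exp (lam * u) by apply/RltP; exact: exp_pos.
exists (lam * exp (lam * u) * V (y u) + exp (lam * u) * dV (y u) (F u (y u))).
  exact: is_derive_mulr (exp_der u) (is_derive_V y_der).
apply/RleP; rewrite [_ * exp _]mulrC -mulrA -mulrDr.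
by apply: mulr_ge0_le0; [exact: ltW | have := dV_le u (y u); lra].
Qed.

End LyapunovDecay.

Section DecayToUGAS.
Variables (m : nat) (F : R -> 'cV[R]_m -> 'cV[R]_m) (xs : 'cV[R]_m) (lam K : R).
Hypotheses (lam_gt0 : 0 < lam) (K_gt0 : 0 < K).
Hypothesis sqdist_decay : forall t0 x0 x t, 0 <= t0 -> is_solution F t0 x0 x -> t0 <= t ->
  (1 + lam * (t - t0)) * dotv (x t - xs) (x t - xs) <= K * dotv (x0 - xs) (x0 - xs).

Let vnormE z : vnorm (z - xs) = Num.sqrt (dotv (z - xs) (z - xs)).
Proof. by rewrite /vnorm RsqrtE. Qed.

Lemma UGS_of_decay : UGS F xs.
Proof.
exists (fun r => Num.sqrt K * r); split.
  have sqrtK_gt0 : 0 < Num.sqrt K by rewrite sqrtr_gt0.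
  split; first by rewrite mulr0.
  split.
    by move=> s _; apply: continuous_mult; [exact: continuous_const | exact: continuous_id].
  split; first by move=> s1 s2 _ lt_s12; rewrite ltr_pM2l.
  move=> c; exists (`|c| / Num.sqrt K); split; first by rewrite divr_ge0 // ltW.
  by rewrite mulrCA divff ?mulr1 ?gt_eqF // ler_norm.
move=> t0 x0 x t0_ge0 x_sol t t0t; rewrite !vnormE -sqrtrM ?ler_sqrt; first last.
- exact: ltW.
- by rewrite mulr_ge0 ?dotv_ge0 // ltW.
have := sqdist_decay t0_ge0 x_sol t0t.
have := dotv_ge0 (x t - xs); have : 0 <= lam * (t - t0) by rewrite mulr_ge0 ?subr_ge0 // ltW.
nra.
Qed.

Lemma UGA_of_decay : UGA F xs.
Proof.
move=> r sig r_gt0 sig_gt0.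
have T'_gt0 : 0 < K * r ^+ 2 / (lam * sig ^+ 2).
  by apply: divr_gt0; apply: mulr_gt0 => //; exact: exprn_gt0.
exists (K * r ^+ 2 / (lam * sig ^+ 2)); split=> // t0 x0 x t0_ge0 x_sol x0_le t t_ge.
rewrite vnormE; have t0t : t0 <= t by apply: le_trans t_ge; rewrite lerDl ltW.
have sqdist0_le : dotv (x0 - xs) (x0 - xs) <= r ^+ 2.
  rewrite -(sqr_sqrtr (dotv_ge0 _)) ler_sqr ?nnegrE ?sqrtr_ge0 ?(ltW r_gt0) //.
  by rewrite -vnormE.
have lam_sig_gt0 : 0 < lam * sig ^+ 2 by rewrite mulr_gt0 ?exprn_gt0.
have Kr2_le : K * r ^+ 2 <= lam * sig ^+ 2 * (t - t0).
  have := ler_wpM2l (ltW lam_sig_gt0) t_ge.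
  have -> : lam * sig ^+ 2 * (t0 + K * r ^+ 2 / (lam * sig ^+ 2)) =
            lam * sig ^+ 2 * t0 + K * r ^+ 2.
    by field; rewrite (lt0r_neq0 sig_gt0) (lt0r_neq0 lam_gt0).
  rewrite mulrBr; lra.
have decay_pos : 0 < 1 + lam * (t - t0).
  have : 0 <= lam * (t - t0) by rewrite mulr_ge0 ?subr_ge0 // ltW.
  lra.
have sqdist_le : dotv (x t - xs) (x t - xs) <= sig ^+ 2.
  rewrite -(ler_pM2r decay_pos) mulrC.
  apply: le_trans (sqdist_decay t0_ge0 x_sol t0t) _.
  have := ler_wpM2l (ltW K_gt0) sqdist0_le; have := exprn_ge0 2 (ltW sig_gt0); lra.
by rewrite -(ger0_norm (ltW sig_gt0)) -sqrtr_sqr ler_sqrt ?sqr_ge0.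
Qed.

Lemma UGAS_of_decay : UGAS F xs.
Proof. by split; [exact: UGS_of_decay | exact: UGA_of_decay]. Qed.

End DecayToUGAS.

Section Estimator.
Variables (n N : nat) (ths : 'cV[R]_n) (phi : R -> 'cV[R]_n) (ts : 'I_N -> R)
  (beta gamma mu : R).
Hypotheses (beta_gt0 : 0 < beta) (gamma_gt0 : 0 < gamma) (mu_gt0 : 0 < mu).
Hypothesis gain_cond : 2 * gamma / mu <= beta.
Variable c : R.
Hypotheses (c_gt0 : 0 < c)
  (excitation : forall e, c * dotv e e <= \sum_(k < N) dotv (phi (ts k)) e ^+ 2).
Local Notation F := (sysF phi ths ts beta gamma mu).

Definition err_th (z : 'cV[R]_(n + n)) := usubmx z - ths.
Definition err_vth (z : 'cV[R]_(n + n)) := dsubmx z - ths.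
Definition weight (k : 'I_N) := (1 + mu * dotv (phi (ts k)) (phi (ts k)))^-1.
Definition data_form (e w : 'cV[R]_n) :=
  \sum_(k < N) weight k * dotv (phi (ts k)) e * dotv (phi (ts k)) w.
Definition data_energy := \sum_(k < N) dotv (phi (ts k)) (phi (ts k)).

Lemma weight_gt0 k : 0 < weight k.
Proof. by rewrite invr_gt0; have := dotv_ge0 (phi (ts k)); have := mu_gt0; nra. Qed.

Lemma weight_le1 k : weight k <= 1.
Proof. by rewrite invf_le1; have := dotv_ge0 (phi (ts k)); have := mu_gt0; nra. Qed.

Lemma data_energy_ge0 : 0 <= data_energy.
Proof. by apply: sumr_ge0 => k _; exact: dotv_ge0. Qed.

Lemma weight_ge k : (1 + mu * data_energy)^-1 <= weight k.
Proof.
have := dotv_ge0 (phi (ts k)); have := data_energy_ge0; have := mu_gt0 => ? ? ?.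
rewrite lef_pV2 ?posrE; [|nra|nra].
have : dotv (phi (ts k)) (phi (ts k)) <= data_energy.
  by rewrite /data_energy (bigD1 k) //= lerDl; apply: sumr_ge0 => j _; exact: dotv_ge0.
nra.
Qed.

Lemma data_form_ge0 e : 0 <= data_form e e.
Proof.
apply: sumr_ge0 => k _; rewrite -mulrA mulr_ge0 ?(ltW (weight_gt0 k)) //.
by rewrite -expr2 sqr_ge0.
Qed.

Lemma data_form_le e : data_form e e <= data_energy * dotv e e.
Proof.
rewrite /data_form /data_energy mulr_suml; apply: ler_sum => k _.
have := cauchy_schwarz_dotv (phi (ts k)) e; have := weight_le1 k; have := weight_gt0 k.
have := dotv_ge0 (phi (ts k)); have := dotv_ge0 e; rewrite expr2; nra.
Qed.

Lemma data_form_coercive e : (1 + mu * data_energy)^-1 * c * dotv e e <= data_form e e.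
Proof.
rewrite -mulrA.
apply: le_trans (ler_wpM2l _ (excitation e)) _.
  by rewrite invr_ge0; have := data_energy_ge0; have := mu_gt0; nra.
rewrite mulr_sumr; apply: ler_sum => k _.
by rewrite -mulrA -expr2; apply: ler_wpM2r; [exact: sqr_ge0 | exact: weight_ge].
Qed.

Lemma data_formC e w : data_form e w = data_form w e.
Proof. by apply: eq_bigr => k _; rewrite mulrAC -mulrA [_ * dotv _ e]mulrC mulrA. Qed.

Lemma data_formZBl a u v w : data_form (a *: (u - v)) w = a * (data_form u w - data_form v w).
Proof.
rewrite /data_form -sumrB mulr_sumr; apply: eq_bigr => k _.
by rewrite dotvZr dotvBr; ring.
Qed.

Lemma is_derive_data_form (u w : R -> 'cV[R]_n) s du dw :
  is_derive_cV u s du -> is_derive_cV w s dw ->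
  is_derive (fun t => data_form (u t) (w t)) s (data_form du (w s) + data_form (u s) dw).
Proof.
move=> Hu Hw; rewrite /data_form -big_split /=; apply: is_derive_sum => k.
apply: is_derive_mulr; last exact: is_derive_dotvr.
by apply: is_derive_scal; exact: is_derive_dotvr.
Qed.

Lemma continuous_data_form (u w : R -> 'cV[R]_n) s :
  continuous_cV u s -> continuous_cV w s -> continuous (fun t => data_form (u t) (w t)) s.
Proof.
move=> Hu Hw; apply: continuous_sum => k; apply: continuous_mult; last exact: continuous_dotvr.
by apply: continuous_mult; [exact: continuous_const | exact: continuous_dotvr].
Qed.

Definition lyap (z : 'cV[R]_(n + n)) :=
  dotv (err_vth z) (err_vth z) - dotv (err_vth z) (err_th z)
  + dotv (err_th z) (err_th z) / 2 + gamma / beta * data_form (err_th z) (err_th z).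

Definition lyap_diff (z w : 'cV[R]_(n + n)) :=
  dotv (dsubmx w) (err_vth z) + dotv (err_vth z) (dsubmx w)
  - (dotv (dsubmx w) (err_th z) + dotv (err_vth z) (usubmx w))
  + (dotv (usubmx w) (err_th z) + dotv (err_th z) (usubmx w)) / 2
  + gamma / beta * (data_form (usubmx w) (err_th z) + data_form (err_th z) (usubmx w)).

Lemma is_derive_lyap (y : R -> 'cV[R]_(n + n)) s w : is_derive_cV y s w ->
  is_derive (fun t => lyap (y t)) s (lyap_diff (y s) w).
Proof.
move=> Hy.
have He : is_derive_cV (fun t => err_th (y t)) s (usubmx w).
  exact/is_derive_cV_subr/is_derive_cV_usubmx.
have Hv : is_derive_cV (fun t => err_vth (y t)) s (dsubmx w).
  exact/is_derive_cV_subr/is_derive_cV_dsubmx.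
apply: is_derive_plus; last by apply: is_derive_scal; exact: is_derive_data_form.
apply: is_derive_plus; last by apply: is_derive_scal_l; exact: is_derive_dotv.
by apply: is_derive_minus; exact: is_derive_dotv.
Qed.

Lemma continuous_lyap (y : R -> 'cV[R]_(n + n)) s : continuous_cV y s ->
  continuous (fun t => lyap (y t)) s.
Proof.
move=> Hy.
have He : continuous_cV (fun t => err_th (y t)) s.
  by apply: continuous_cV_sub; [exact: continuous_cV_usubmx | exact: continuous_cV_const].
have Hv : continuous_cV (fun t => err_vth (y t)) s.
  by apply: continuous_cV_sub; [exact: continuous_cV_dsubmx | exact: continuous_cV_const].
apply: continuous_plus; last first.
  by apply: continuous_mult; [exact: continuous_const | exact: continuous_data_form].
apply: continuous_plus; last first.
  by apply: continuous_mult; [exact: continuous_dotv | exact: continuous_const].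
by apply: continuous_minus; exact: continuous_dotv.
Qed.

(* The body of [Nt] is parsed with Stdlib's [Rplus], [Rmult] and [IZR 1]. *)
Lemma NtE t : Nt phi mu t = 1 + mu * dotv (phi t) (phi t).
Proof. by []. Qed.

Lemma Nt_gt0 t : 0 < Nt phi mu t.
Proof. by rewrite NtE; have := dotv_ge0 (phi t); have := mu_gt0; nra. Qed.

Lemma usubmx_sysF t z : usubmx (F t z) = - beta *: (err_th z - err_vth z).
Proof. by rewrite /sysF col_mxKu /err_th /err_vth opprB addrA subrK. Qed.

Lemma dotv_usubmx_sysF t z w :
  dotv (usubmx (F t z)) w = - beta * (dotv (err_th z) w - dotv (err_vth z) w).
Proof. by rewrite usubmx_sysF dotvZl dotvBl. Qed.

Lemma data_form_usubmx_sysF t z w :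
  data_form (usubmx (F t z)) w = - beta * (data_form (err_th z) w - data_form (err_vth z) w).
Proof. by rewrite usubmx_sysF data_formZBl. Qed.

Lemma dotv_dsubmx_sysF t z w : dotv (dsubmx (F t z)) w =
  - gamma * (dotv (phi t) (err_th z) / Nt phi mu t * dotv (phi t) w + data_form (err_th z) w).
Proof.
rewrite /sysF col_mxKd dotvZl dotvDl dotvZl /Bterm dotv_suml /ystar -dotvBr.
congr (_ * (_ + _)); apply: eq_bigr => k _.
by rewrite dotvZl /err_th dotvBr /weight; ring.
Qed.

Lemma lyap_diff_sysF t z : lyap_diff z (F t z) =
  gamma / Nt phi mu t * (dotv (phi t) (err_th z) ^+ 2
                          - 2 * dotv (phi t) (err_th z) * dotv (phi t) (err_vth z))
  - gamma * data_form (err_th z) (err_th z)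
  - beta * dotv (err_th z - err_vth z) (err_th z - err_vth z).
Proof.
rewrite /lyap_diff (dotvC (err_vth z) (dsubmx _)) (dotvC (err_th z) (usubmx _)).
rewrite (dotvC (err_vth z) (usubmx _)) (data_formC (err_th z) (usubmx _)).
rewrite !dotv_dsubmx_sysF !dotv_usubmx_sysF !data_form_usubmx_sysF dotv_sqrB.
rewrite (dotvC (err_vth z) (err_th z)) (data_formC (err_vth z)).
by field; rewrite (gt_eqF (Nt_gt0 t)) (gt_eqF beta_gt0).
Qed.

Lemma normalized_cross_term_le t e v :
  gamma / Nt phi mu t * (dotv (phi t) e ^+ 2 - 2 * dotv (phi t) e * dotv (phi t) v)
  <= beta / 2 * dotv (e - v) (e - v).
Proof.
set a := dotv (phi t) e; set b := dotv (phi t) v; set p := dotv (phi t) (phi t).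
set g := gamma / Nt phi mu t; set d := dotv (e - v) (e - v).
have cross_le : a ^+ 2 - 2 * a * b <= p * d.
  have := cauchy_schwarz_dotv (phi t) (e - v); rewrite dotvBr -/a -/b -/p -/d.
  by have := sqr_ge0 b; nra.
have gain : g * p <= beta / 2.
  have : 2 * gamma <= beta * mu by have := gain_cond; rewrite ler_pdivrMr.
  rewrite /g mulrAC ler_pdivrMr ?Nt_gt0 // NtE -/p.
  by have : 0 <= p := dotv_ge0 _; have := gamma_gt0; have := beta_gt0; nra.
have g_ge0 : 0 <= g by rewrite divr_ge0 ?(ltW gamma_gt0) ?(ltW (Nt_gt0 t)).
have := ler_wpM2l g_ge0 cross_le; have := ler_wpM2r (dotv_ge0 (e - v)) gain.
by rewrite -/d mulrA; lra.
Qed.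

Lemma lyap_diff_sysF_le t z :
  lyap_diff z (F t z) <= - gamma * data_form (err_th z) (err_th z)
                         - beta / 2 * dotv (err_th z - err_vth z) (err_th z - err_vth z).
Proof.
by rewrite lyap_diff_sysF; have := normalized_cross_term_le t (err_th z) (err_vth z); lra.
Qed.

Definition lyap_ub_const := 2 + gamma / beta * data_energy.

Lemma lyap_ub_const_gt0 : 0 < lyap_ub_const.
Proof.
rewrite /lyap_ub_const; have : 0 <= gamma / beta * data_energy.
  by rewrite mulr_ge0 ?divr_ge0 ?(ltW gamma_gt0) ?(ltW beta_gt0) ?data_energy_ge0.
lra.
Qed.

(* [|v|^2 - <v, e> + |e|^2 / 2 - (|e|^2 + |v|^2) / 6 = 5/6 |v - 3/5 e|^2 + |e|^2 / 30]. *)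
Lemma lyap_ge z : (dotv (err_th z) (err_th z) + dotv (err_vth z) (err_vth z)) / 6 <= lyap z.
Proof.
rewrite /lyap; have := dotv_combination (err_th z) (err_vth z) (- (3 / 5)) 1.
have := dotv_ge0 (- (3 / 5) *: err_th z + 1 *: err_vth z); have := dotv_ge0 (err_th z).
have : 0 <= gamma / beta * data_form (err_th z) (err_th z).
  by rewrite mulr_ge0 ?divr_ge0 ?(ltW gamma_gt0) ?(ltW beta_gt0) ?data_form_ge0.
rewrite (dotvC (err_th z)); lra.
Qed.

Lemma lyap_le z :
  lyap z <= lyap_ub_const * (dotv (err_th z) (err_th z) + dotv (err_vth z) (err_vth z)).
Proof.
rewrite /lyap /lyap_ub_const; have := dotv_combination (err_th z) (err_vth z) 1 1.
have := dotv_ge0 (1 *: err_th z + 1 *: err_vth z).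
have := dotv_ge0 (err_th z); have := dotv_ge0 (err_vth z).
have gb_ge0 : 0 <= gamma / beta by rewrite divr_ge0 ?(ltW gamma_gt0) ?(ltW beta_gt0).
have := ler_wpM2l gb_ge0 (data_form_le (err_th z)).
have := mulr_ge0 (mulr_ge0 gb_ge0 data_energy_ge0) (dotv_ge0 (err_vth z)).
rewrite (dotvC (err_th z)) !mulrA; lra.
Qed.

Definition lyap_rate :=
  Num.min (gamma * ((1 + mu * data_energy)^-1 * c)) (beta / 2) / 3 / lyap_ub_const.

Lemma lyap_rate_gt0 : 0 < lyap_rate.
Proof.
have coerc_gt0 : 0 < gamma * ((1 + mu * data_energy)^-1 * c).
  rewrite !mulr_gt0 // invr_gt0; have := data_energy_ge0; have := mu_gt0; nra.
by rewrite !divr_gt0 ?lyap_ub_const_gt0 // lt_min coerc_gt0 /=; have := beta_gt0; lra.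
Qed.

(* With [m] the smaller of the two rates, [|v|^2 <= 2 |e|^2 + 2 |e - v|^2] gives
   [dV <= - m/3 (|e|^2 + |v|^2)], and [V <= lyap_ub_const (|e|^2 + |v|^2)]. *)
Lemma lyap_diff_sysF_le_lyap t z : lyap_diff z (F t z) <= - lyap_rate * lyap z.
Proof.
have rate_gt0 := lyap_rate_gt0; move: rate_gt0; rewrite /lyap_rate.
set q := (1 + mu * data_energy)^-1 * c; set m := Num.min _ _ => rate_gt0.
have m_le_q : m <= gamma * q by rewrite ge_min lexx.
have m_le_b : m <= beta / 2 by rewrite ge_min lexx orbT.
have m_ge0 : 0 <= m.
  by move: rate_gt0; rewrite !pmulr_lgt0 ?invr_gt0 ?lyap_ub_const_gt0 // => /ltW.
have S_ge : gamma * (q * dotv (err_th z) (err_th z)) <= gamma * data_form (err_th z) (err_th z).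
  by rewrite ler_pM2l //; exact: data_form_coercive.
have W_le : dotv (err_vth z) (err_vth z) <=
    2 * dotv (err_th z) (err_th z) + 2 * dotv (err_th z - err_vth z) (err_th z - err_vth z).
  have := dotv_ge0 (2 *: err_th z + (-1) *: err_vth z).
  by rewrite dotv_combination dotv_sqrB; lra.
have := lyap_diff_sysF_le t z; have := lyap_le z.
have := dotv_ge0 (err_th z); have := dotv_ge0 (err_th z - err_vth z).
have := lyap_ub_const_gt0; set u := lyap_ub_const => ub_gt0 D_ge0 E_ge0 V_le dV_le.
set E := dotv (err_th z) (err_th z) in S_ge W_le E_ge0 V_le *.
set W := dotv (err_vth z) (err_vth z) in W_le V_le *.
set D := dotv (_ - _) _ in W_le D_ge0 dV_le *.
have e4 : m / 3 / u * lyap z <= m / 3 / u * (u * (E + W)).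
  by rewrite ler_wpM2l // divr_ge0 ?divr_ge0 ?(ltW ub_gt0).
have e5 : m / 3 / u * (u * (E + W)) = m / 3 * (E + W) by field; rewrite gt_eqF.
have := ler_wpM2r E_ge0 m_le_q; have := ler_wpM2r D_ge0 m_le_b.
have := ler_wpM2l m_ge0 W_le; nra.
Qed.

Lemma sqdist_col_mx z : dotv (z - col_mx ths ths) (z - col_mx ths ths) =
  dotv (err_th z) (err_th z) + dotv (err_vth z) (err_vth z).
Proof.
rewrite /dotv big_split_ord /=; congr (_ + _); apply: eq_bigr => i _.
  by rewrite mxE opp_col_mx col_mxEu /err_th !mxE.
by rewrite mxE opp_col_mx col_mxEd /err_vth !mxE.
Qed.

Lemma continuous_cV_sysF (y : R -> 'cV[R]_(n + n)) s :
  continuous_cV y s -> continuous_cV phi s -> continuous_cV (fun t => F t (y t)) s.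
Proof.
move=> Hy Hphi; rewrite /sysF /ystar.
have Hu := continuous_cV_usubmx Hy; have Hd := continuous_cV_dsubmx Hy.
have dotv_ths : continuous (fun t => dotv (phi t) ths) s.
  exact: continuous_dotv Hphi (@continuous_cV_const _ s ths).
apply: continuous_cV_col_mx.
  by apply: continuous_cV_scale; [exact: continuous_const | exact: continuous_cV_sub].
apply: continuous_cV_scale; first exact: continuous_const.
apply: continuous_cV_add.
  apply: continuous_cV_scale => //; apply: continuous_mult.
    by apply: continuous_minus => //; exact: continuous_dotv.
  apply: continuous_Rinv_comp; last by apply/eqP; rewrite gt_eqF ?Nt_gt0.
  rewrite /Nt; apply: continuous_plus; first exact: continuous_const.
  by apply: continuous_mult; [exact: continuous_const | exact: continuous_dotv].
apply: continuous_cV_sum => k; apply: continuous_cV_scale; last exact: continuous_cV_const.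
apply: continuous_mult; last exact: continuous_const.
by apply: continuous_minus; [exact: continuous_dotvr | exact: continuous_const].
Qed.

Lemma sysF_piecewise_continuous : piecewise_continuous phi ->
  forall T, 0 <= T -> exists L : seq R, forall t, 0 < t -> t <= T -> ~ List.In t L ->
  forall y, continuous_cV y t -> continuous_cV (fun s => F s (y s)) t.
Proof.
move=> phi_pc T T_ge0; have [L [phi_cont _]] := phi_pc T T_ge0.
by exists L => t t_gt0 tT tL y y_cont; apply: continuous_cV_sysF y_cont (phi_cont t t_gt0 tT tL).
Qed.

Lemma sysF_sqdist_decay : piecewise_continuous phi ->
  forall t0 x0 x t, 0 <= t0 -> is_solution F t0 x0 x -> t0 <= t ->
  (1 + lyap_rate * (t - t0)) * dotv (x t - col_mx ths ths) (x t - col_mx ths ths)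
    <= 6 * lyap_ub_const * dotv (x0 - col_mx ths ths) (x0 - col_mx ths ths).
Proof.
move=> phi_pc t0 x0 x t t0_ge0 x_sol t0t.
have := exp_lyapunov_nonincreasing continuous_lyap is_derive_lyap lyap_diff_sysF_le_lyap
  (sysF_piecewise_continuous phi_pc) t0_ge0 x_sol t0t.
have := exp_plus (lyap_rate * t0) (lyap_rate * (t - t0)); rewrite !RmultE RplusE.
have -> : lyap_rate * t0 + lyap_rate * (t - t0) = lyap_rate * t by ring.
move=> ->; rewrite -mulrA ler_pM2l; last by apply/RltP; exact: exp_pos.
have exp_ge : 1 + lyap_rate * (t - t0) <= exp (lyap_rate * (t - t0)).
  by apply/RleP; rewrite -RmultE -RplusE; exact: exp_ineq1_le.
have exp_ge0 : 0 <= exp (lyap_rate * (t - t0)) by apply/RleP/Rlt_le/exp_pos.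
rewrite !sqdist_col_mx => decay.
have := ler_wpM2r (addr_ge0 (dotv_ge0 (err_th (x t))) (dotv_ge0 (err_vth (x t)))) exp_ge.
have := ler_wpM2l exp_ge0 (lyap_ge (x t)); have := lyap_le x0.
have := lyap_ub_const_gt0; nra.
Qed.

End Estimator.

Theorem theorem4 (n N : nat) (thetastar : 'cV[R]_n) (phi : R -> 'cV[R]_n) (M : R)
    (ts : 'I_N -> R) (beta gamma mu : R) :
  piecewise_continuous phi ->
  0 < M -> (forall t : R, 0 <= t -> vnorm (phi t) <= M) ->
  (forall k : 'I_N, 0 <= ts k) ->
  \rank (Dmat phi ts) = n ->
  0 < beta -> 0 < gamma -> 0 < mu -> 2 * gamma / mu <= beta ->
  UGAS (sysF phi thetastar ts beta gamma mu) (col_mx thetastar thetastar).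
Proof.
move=> phi_pc _ _ _ rankD beta_gt0 gamma_gt0 mu_gt0 gain_cond.
have [c c_gt0 coercive] := full_rank_coercive rankD.
have excitation e : c * dotv e e <= \sum_(k < N) dotv (phi (ts k)) e ^+ 2.
  by rewrite -dotv_Dmat_trmx; exact: coercive.
have decay := sysF_sqdist_decay (ths := thetastar) beta_gt0 gamma_gt0 mu_gt0 gain_cond
  c_gt0 excitation phi_pc.
apply: UGAS_of_decay (lyap_rate_gt0 phi ts beta_gt0 gamma_gt0 mu_gt0 c_gt0) _ decay.
by rewrite mulr_gt0 // lyap_ub_const_gt0.
Qed.
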